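(* Let $q=p^f$ be a prime power and $N>2$ an integer with $N\mid(q-1)$; put $k=(q-1)/N$. Let $\gamma$ be a primitive element of $\mathbb{F}_q$, $C_0=\langle\gamma^N\rangle$, and let $\eta_a=\sum_{x\in\gamma^aC_0}\psi(x)$, $0\le a\le N-1$. Suppose the $\eta_a$ take exactly three distinct rational values $\alpha_1,\alpha_2,\alpha_3$, and for $i=1,2,3$ let $I_i=\{a\in\mathbb{Z}_N:\eta_a=\alpha_i\}$. Then $$|I_1|=-\frac{\alpha_2\alpha_3(q-1)+k(q-k+\alpha_2+\alpha_3)}{k(\alpha_1-\alpha_2)(\alpha_3-\alpha_1)},\quad |I_2|=-\frac{\alpha_1\alpha_3(q-1)+k(q-k+\alpha_1+\alpha_3)}{k(\alpha_1-\alpha_2)(\alpha_2-\alpha_3)},$$ $$|I_3|=-\frac{\alpha_1\alpha_2(q-1)+k(q-k+\alpha_1+\alpha_2)}{k(\alpha_2-\alpha_3)(\alpha_3-\alpha_1)}.$$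
   Context: $\psi$ is the canonical additive character of $\mathbb{F}_q$: $\psi(x)=\xi_p^{\mathrm{Tr}_{q/p}(x)}$, where $\xi_p$ is a complex primitive $p$-th root of unity and $\mathrm{Tr}_{q/p}$ is the absolute trace. *)

From mathcomp Require Import all_boot all_order all_algebra all_field.
Set Implicit Arguments. Unset Strict Implicit. Unset Printing Implicit Defensive.
Import GRing.Theory Num.Theory.
Local Open Scope ring_scope.

Definition abs_trace (F : finFieldType) (p f : nat) (x : F) : F :=
  \sum_(i < f) x ^+ (p ^ i)%N.

(* The trace lies in the prime field F_p; its representative in {0,..,p-1}. *)
Definition trace_nat (F : finFieldType) (p f : nat) (x : F) : nat :=
  oapp (@nat_of_ord p) 0%N [pick n : 'I_p | (n%:R : F) == abs_trace p f x].

Definition can_add_char (F : finFieldType) (p f : nat) (xi : algC) (x : F) : algC :=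
  xi ^+ trace_nat p f x.

Definition cyc_coset (F : finFieldType) (g : F) (N a : nat) : {set F} :=
  [set g ^+ a * g ^+ (N * j)%N | j : 'I_#|F|].

Definition gauss_period (F : finFieldType) (p f : nat) (xi : algC) (g : F) (N a : nat) : algC :=
  \sum_(x in cyc_coset g N a) can_add_char p f xi x.

(* Write n_i = |I_i|.  The cosets gamma^a C_0 partition F^* into N classes of size k, so
   N = n1 + n2 + n3 and q = N k + 1.  Summing psi over F^* gives sum_a eta_a = -1.  Writing
   eta_a conj(eta_a) as a double sum of psi(x (1 - t)) over x in gamma^a C_0 and t in C_0 and
   summing over a, the inner sum over x in F^* is q - 1 for t = 1 and -1 otherwise, so
   sum_a |eta_a|^2 = q - k.  As the eta_a are rational, these are three linear equations in
   (n1, n2, n3) with a Vandermonde matrix in the alpha_i, and solving them gives the formulas. *)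

From mathcomp Require Import all_boot all_order all_algebra all_field.
From mathcomp Require Import ring.
Import GRing.Theory Num.Theory.
Local Open Scope ring_scope.
Set Implicit Arguments. Unset Strict Implicit.

Lemma natr_eq_pchar (R : nzRingType) (p m n : nat) : p \in [pchar R] ->
  ((m%:R : R) == n%:R) = (m == n %[mod p]).
Proof.
move=> hc; wlog le_mn : m n / (m <= n)%N.
  by move=> H; case: (leqP m n) => [/H //|/ltnW/H]; rewrite eq_sym [RHS]eq_sym.
by rewrite eq_sym [RHS]eq_sym eqn_mod_dvd // (dvdn_pcharf hc) natrB // subr_eq0.
Qed.

Lemma card_finField_prednK (F : finFieldType) : (#|F|.-1).+1 = #|F|.
Proof. by rewrite prednK // (ltn_trans _ (finNzRing_gt1 F)). Qed.

Section AdditiveCharacter.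

Variables (F : finFieldType) (p f : nat) (xi : algC).
Hypotheses (hp : prime p) (hchar : p \in [pchar F]) (hq : #|F| = (p ^ f)%N).
Hypothesis hxi : p.-primitive_root xi.

Local Notation Tr := (@abs_trace F p f).
Local Notation psi := (@can_add_char F p f xi).

Lemma abs_traceD : {morph Tr : x y / x + y}.
Proof.
move=> x y; rewrite /abs_trace -big_split; apply: eq_bigr => i _.
by rewrite exprDn_pchar // pnatX (pnatE _ hp) hchar.
Qed.

Lemma abs_traceXp x : Tr x ^+ p = Tr x.
Proof.
rewrite /abs_trace -(pFrobenius_autE hchar) rmorph_sum /=.
under eq_bigr => i _ do rewrite pFrobenius_autE -exprM -expnSr.
case: f hq => [|f'] hq'; first by rewrite !big_ord0.
rewrite big_ord_recr big_ord_recl /= -hq' expf_card expn0 expr1 addrC.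
by congr (_ + _); apply: eq_bigr => i _.
Qed.

(* The p elements of the prime field already exhaust the roots of X^p - X. *)
Lemma frobenius_fixed_natr (z : F) : z ^+ p = z -> exists2 n, (n < p)%N & z = n%:R.
Proof.
move=> hz; pose P : {poly F} := 'X^p - 'X.
have sizeP : size P = p.+1.
  by rewrite size_polyDl ?size_polyXn // size_polyN size_polyX ltnS prime_gt1.
have rootP w : root P w = (w ^+ p == w) by rewrite rootE !hornerE subr_eq0.
pose Fp := [seq (i%:R : F) | i <- iota 0 p].
have uniq_Fp : uniq Fp.
  rewrite map_inj_in_uniq ?iota_uniq // => i j; rewrite !mem_iota /= => hi hj.
  by move/eqP; rewrite (natr_eq_pchar _ _ hchar) !modn_small // => /eqP.
have roots_Fp : all (root P) Fp.
  by apply/allP => _ /mapP [i _ ->]; rewrite rootP -(pFrobenius_autE hchar) rmorph_nat.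
case: (boolP (z \in Fp)) => [/mapP [i]|zNFp]; first by rewrite mem_iota; exists i.
have P_neq0 : P != 0 by rewrite -size_poly_eq0 sizeP.
have := max_poly_roots P_neq0 (rs := z :: Fp).
by rewrite /= rootP hz eqxx roots_Fp zNFp uniq_Fp sizeP size_map size_iota ltnn => /(_ isT isT).
Qed.

Lemma trace_natE x : (trace_nat p f x)%:R = Tr x.
Proof.
rewrite /trace_nat; case: pickP => [n /eqP -> //|none].
have [n ltnp Trx] := frobenius_fixed_natr (abs_traceXp x).
by have := none (Ordinal ltnp); rewrite /= -Trx eqxx.
Qed.

Lemma can_add_charD : {morph psi : x y / x + y >-> x * y}.
Proof.
move=> x y; rewrite /can_add_char -exprD; apply/eqP.
by rewrite (eq_prim_root_expr hxi) -(natr_eq_pchar _ _ hchar) natrD !trace_natE abs_traceD.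
Qed.

Lemma can_add_char_eq1 x : (psi x == 1) = (Tr x == 0).
Proof. by rewrite -(prim_order_dvd hxi) (dvdn_pcharf hchar) trace_natE. Qed.

Lemma abs_trace0 : Tr 0 = 0.
Proof. by apply: (addrI (Tr 0)); rewrite -abs_traceD !addr0. Qed.

Lemma can_add_char0 : psi 0 = 1.
Proof. by apply/eqP; rewrite can_add_char_eq1 abs_trace0. Qed.

(* Tr is a polynomial function of degree p^(f-1) < #|F|, so it cannot vanish everywhere. *)
Lemma abs_trace_nontrivial : exists x, Tr x != 0.
Proof.
have f_gt0 : (0 < f)%N by case: f hq => // hq0; have := finNzRing_gt1 F; rewrite hq0.
have p_gt1 := prime_gt1 hp.
apply/existsP; rewrite -negb_forall; apply/forallP => /= Tr0.
pose T : {poly F} := \sum_(i < f) 'X^(p ^ i).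
have T_neq0 : T != 0.
  apply/eqP => /(congr1 (fun P : {poly F} => P`_(p ^ f.-1))).
  have last_lt : (f.-1 < f)%N by rewrite prednK.
  rewrite coef0 /T coef_sum (bigD1 (Ordinal last_lt)) //= coefXn eqxx big1 ?addr0.
    by move/eqP; rewrite oner_eq0.
  move=> i neq_i; rewrite coefXn eqn_exp2l // eq_sym.
  by rewrite -[_ == f.-1]/(i == Ordinal last_lt) (negbTE neq_i).
have sizeT : (size T <= (p ^ f.-1).+1)%N.
  apply: leq_trans (size_sum _ _ _) _; apply/bigmax_leqP => i _.
  by rewrite size_polyXn ltnS leq_exp2l // -ltnS prednK.
have rootsT : all (root T) (enum F).
  apply/allP => x _; rewrite rootE /T horner_sum.
  by under eq_bigr => i _ do rewrite hornerXn; exact: Tr0.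
have := leq_trans (max_poly_roots T_neq0 rootsT (enum_uniq F)) sizeT.
by rewrite -cardE hq ltnS leq_exp2l // -ltnS prednK // ltnn.
Qed.

Lemma sum_can_add_char : \sum_x psi x = 0.
Proof.
have [x0 Trx0] := abs_trace_nontrivial.
have : (1 - psi x0) * \sum_x psi x == 0.
  rewrite mulrBl mul1r mulr_sumr subr_eq0 (reindex_inj (addrI x0)) /=.
  by apply/eqP; apply: eq_bigr => x _; rewrite can_add_charD.
by rewrite mulf_eq0 subr_eq0 eq_sym can_add_char_eq1 (negbTE Trx0) => /eqP.
Qed.

Lemma sum_can_add_charM c : \sum_x psi (c * x) = if c == 0 then #|F|%:R else 0.
Proof.
have [-> | c_neq0] := eqVneq c 0.
  by under eq_bigr => x _ do rewrite mul0r can_add_char0; rewrite sumr_const.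
by have := sum_can_add_char; rewrite (reindex_inj (mulfI c_neq0)).
Qed.

Lemma sum_nonzero_can_add_char : \sum_(x | x != 0) psi x = -1.
Proof.
have := sum_can_add_char; rewrite (bigD1 0) //= can_add_char0 => /eqP.
by rewrite addrC addr_eq0 => /eqP.
Qed.

Lemma norm_can_add_char x : `|psi x| = 1.
Proof.
apply/eqP; rewrite -(pexpr_eq1 (prime_gt0 hp)) // -normrX.
by rewrite /can_add_char exprAC (prim_expr_order hxi) expr1n normr1.
Qed.

Lemma can_add_charN x : psi (- x) = (psi x)^*.
Proof.
have psi_neq0 : psi x != 0 by rewrite -normr_eq0 norm_can_add_char oner_eq0.
apply: (mulfI psi_neq0); rewrite -can_add_charD subrr can_add_char0.
by rewrite -normCK norm_can_add_char expr1n.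
Qed.

End AdditiveCharacter.

Section CyclotomicCosets.

Variables (F : finFieldType) (g : F) (N : nat).
Hypothesis hg : (#|F|.-1).-primitive_root g.
Hypothesis hN : (N %| #|F|.-1)%N.

Local Notation C := (cyc_coset g N).

(* [dlog 0 = 0] is a junk value. *)
Definition dlog (x : F) : nat :=
  oapp (@nat_of_ord _) 0%N [pick m : 'I_#|F|.-1 | g ^+ m == x].

Lemma dlog_lt x : (dlog x < #|F|)%N.
Proof.
rewrite /dlog; case: pickP => [m _ /=|_]; last exact: ltn_trans (finNzRing_gt1 F).
by apply: ltn_trans (ltn_ord m) _; rewrite -card_finField_prednK.
Qed.

Lemma prim_root_gen_neq0 : g != 0.
Proof. by rewrite (prim_root_eq0 hg) -lt0n -ltnS card_finField_prednK finNzRing_gt1. Qed.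

Lemma dlogK x : x != 0 -> g ^+ dlog x = x.
Proof.
move=> x_neq0; rewrite /dlog; case: pickP => [m /eqP //|none].
have x_unity : x ^+ #|F|.-1 = 1.
  by apply: (mulfI x_neq0); rewrite mulr1 -exprS card_finField_prednK expf_card.
have [m gm] := prim_rootP hg x_unity.
by have := none m; rewrite gm eqxx.
Qed.

Lemma dlog_expr m : dlog (g ^+ m) = m %[mod N].
Proof.
have gm_neq0 : g ^+ m != 0 by rewrite expf_neq0 // prim_root_gen_neq0.
have /eqP := dlogK gm_neq0; rewrite (eq_prim_root_expr hg) => /eqP dlog_m.
by rewrite -(modn_dvdm _ hN) dlog_m modn_dvdm.
Qed.

Lemma mem_cyc_coset a x : (a < N)%N -> (x \in C a) = (x != 0) && (dlog x %% N == a)%N.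
Proof.
move=> lt_aN; apply/imsetP/andP => [[j _ ->]|[x_neq0 /eqP dlog_x]].
  rewrite -exprD expf_neq0 ?prim_root_gen_neq0 // dlog_expr.
  by rewrite addnC mulnC modnMDl modn_small.
have lt_j : (dlog x %/ N < #|F|)%N by apply: leq_ltn_trans (leq_div (dlog x) N) (dlog_lt x).
exists (Ordinal lt_j) => //=.
by rewrite -exprD mulnC addnC -dlog_x -divn_eq dlogK.
Qed.

Lemma cyc_cosetMr a x t : (a < N)%N -> x \in C a -> (x * t \in C a) = (t \in C 0).
Proof.
move=> lt_aN; have N_gt0 : (0 < N)%N by apply: leq_ltn_trans lt_aN.
rewrite !mem_cyc_coset // => /andP [x_neq0 /eqP dlog_x].
rewrite mulf_eq0 negb_or x_neq0 /=; have [// | t_neq0] := eqVneq t 0.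
rewrite -{1}(dlogK x_neq0) -{1}(dlogK t_neq0) -exprD dlog_expr -modnDml dlog_x.
by rewrite -{2}(modn_small lt_aN) -{2}(addn0 a) eqn_modDl mod0n.
Qed.

Lemma sum_cyc_coset_shift (V : nmodType) (G : F -> V) a x : (a < N)%N -> x \in C a ->
  \sum_(y in C a) G y = \sum_(t in C 0) G (x * t).
Proof.
move=> lt_aN Cx; have x_neq0 : x != 0 by move: Cx; rewrite mem_cyc_coset // => /andP [].
by rewrite (reindex_inj (mulfI x_neq0)); apply: eq_bigl => t; rewrite cyc_cosetMr.
Qed.

Lemma sum_cyc_cosets (V : nmodType) (G : F -> V) : (0 < N)%N ->
  \sum_(a < N) \sum_(x in C a) G x = \sum_(x | x != 0) G x.
Proof.
move=> N_gt0; pose cls x : 'I_N := Ordinal (ltn_pmod (dlog x) N_gt0).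
rewrite (partition_big cls predT) //=; apply: eq_bigr => a _.
by apply: eq_bigl => x; rewrite mem_cyc_coset.
Qed.

Lemma expr_mem_cyc_coset a : (a < N)%N -> g ^+ a \in C a.
Proof.
move=> lt_aN; rewrite mem_cyc_coset // expf_neq0 ?prim_root_gen_neq0 //=.
by rewrite dlog_expr modn_small.
Qed.

Lemma card_cyc_coset a : (a < N)%N -> #|C a| = (#|F|.-1 %/ N)%N.
Proof.
move=> lt_aN; have N_gt0 : (0 < N)%N by apply: leq_ltn_trans lt_aN.
have cardC b : (b < N)%N -> #|C b| = #|C 0|.
  move=> lt_bN; rewrite -!sum1_card.
  exact: (sum_cyc_coset_shift (fun _ => 1%N) lt_bN (expr_mem_cyc_coset lt_bN)).
have := sum_cyc_cosets (fun _ => 1%N) N_gt0.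
under eq_bigr => b _ do rewrite sum1_card cardC //.
by rewrite sum1_card cardC1 sum_nat_const card_ord cardC // => <-; rewrite mulKn.
Qed.

End CyclotomicCosets.

Section GaussianPeriods.

Variables (F : finFieldType) (p f N : nat) (xi : algC) (g : F).
Hypotheses (hp : prime p) (hchar : p \in [pchar F]) (hq : #|F| = (p ^ f)%N).
Hypotheses (hxi : p.-primitive_root xi) (hg : (#|F|.-1).-primitive_root g).
Hypotheses (hN : (N %| #|F|.-1)%N) (N_gt0 : (0 < N)%N).

Local Notation psi := (@can_add_char F p f xi).
Local Notation eta := (gauss_period p f xi g N).
Local Notation C := (cyc_coset g N).

Lemma sum_gauss_period : \sum_(a < N) eta a = -1.
Proof. by rewrite -(sum_nonzero_can_add_char hp hchar hq hxi) -(sum_cyc_cosets hg hN). Qed.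

Lemma gauss_period_normsq a : (a < N)%N ->
  eta a * (eta a)^* = \sum_(x in C a) \sum_(t in C 0) psi (x * (1 - t)).
Proof.
move=> lt_aN; rewrite /gauss_period rmorph_sum mulr_suml; apply: eq_bigr => x Cx.
rewrite mulr_sumr (sum_cyc_coset_shift hg hN (fun y => psi x * (psi y)^*) lt_aN Cx).
apply: eq_bigr => t _.
by rewrite -(can_add_charN hp hchar hq hxi) -(can_add_charD hp hchar hq hxi) mulrBr mulr1.
Qed.

Lemma sum_gauss_period_normsq :
  \sum_(a < N) eta a * (eta a)^* = #|F|%:R - (#|F|.-1 %/ N)%:R.
Proof.
under eq_bigr => a _ do rewrite (gauss_period_normsq (ltn_ord a)).
rewrite (sum_cyc_cosets hg hN _ N_gt0) exchange_big /=.
have sum_nonzero t :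
    \sum_(x | x != 0) psi (x * (1 - t)) = \sum_x psi ((1 - t) * x) - 1.
  rewrite [X in _ = X - 1](bigD1 0) //= mulr0 (can_add_char0 hp hchar hq hxi) addrC addrK.
  by apply: eq_bigr => x _; rewrite mulrC.
under eq_bigr => t _ do rewrite sum_nonzero (sum_can_add_charM hp hchar hq hxi) subr_eq0 eq_sym.
rewrite sumrB sumr_const (card_cyc_coset hg hN N_gt0) (bigD1 1) /=; last first.
  by rewrite -(expr0 g) expr_mem_cyc_coset.
by rewrite eqxx big1 ?addr0 // => t /andP [_ /negbTE ->].
Qed.

End GaussianPeriods.

Lemma sum_three_valued (I : finType) (T : eqType) (V : nmodType) (e : I -> T) (G : T -> V)
    (v1 v2 v3 : T) : v1 != v2 -> v1 != v3 -> v2 != v3 ->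
    (forall i, e i \in [:: v1; v2; v3]) ->
  \sum_i G (e i) = G v1 *+ #|[set i | e i == v1]| + G v2 *+ #|[set i | e i == v2]|
                   + G v3 *+ #|[set i | e i == v3]|.
Proof.
move=> h12 h13 h23 he; rewrite -!sumr_const !(big_mkcond (fun i => i \in _)) -!big_split /=.
apply: eq_bigr => i _; rewrite !inE; move: (he i); rewrite !inE => /or3P [] /eqP ->.
- by rewrite eqxx (negbTE h12) (negbTE h13) !addr0.
- by rewrite eqxx eq_sym (negbTE h12) (negbTE h23) add0r addr0.
- by rewrite eqxx eq_sym (negbTE h13) eq_sym (negbTE h23) !add0r.
Qed.

(* The combination (second moment - (q - k)) - (a2 + a3) (first moment + 1) eliminates n2 and n3. *)
Lemma count_from_moments (R : comRingType) (n1 n2 n3 a1 a2 a3 k q : R) :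
    q = (n1 + n2 + n3) * k + 1 -> n1 * a1 + n2 * a2 + n3 * a3 = -1 ->
    n1 * a1 ^+ 2 + n2 * a2 ^+ 2 + n3 * a3 ^+ 2 = q - k ->
  n1 * (k * (a1 - a2) * (a3 - a1)) = - (a2 * a3 * (q - 1) + k * (q - k + a2 + a3)).
Proof.
move=> hq m1 m2; apply/eqP; rewrite eq_sym -subr_eq0.
have -> : - (a2 * a3 * (q - 1) + k * (q - k + a2 + a3)) - n1 * (k * (a1 - a2) * (a3 - a1))
    = k * ((n1 * a1 ^+ 2 + n2 * a2 ^+ 2 + n3 * a3 ^+ 2 - (q - k))
           - (a2 + a3) * (n1 * a1 + n2 * a2 + n3 * a3 + 1)).
  by rewrite hq; ring.
by rewrite m2 m1 subrr addNr mulr0 subr0 mulr0.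
Qed.

Lemma solve_three_counts (K : fieldType) (n1 n2 n3 a1 a2 a3 k q : K) :
    a1 != a2 -> a1 != a3 -> a2 != a3 -> k != 0 ->
    q = (n1 + n2 + n3) * k + 1 -> n1 * a1 + n2 * a2 + n3 * a3 = -1 ->
    n1 * a1 ^+ 2 + n2 * a2 ^+ 2 + n3 * a3 ^+ 2 = q - k ->
  [/\ n1 = - (a2 * a3 * (q - 1) + k * (q - k + a2 + a3)) / (k * (a1 - a2) * (a3 - a1)),
      n2 = - (a1 * a3 * (q - 1) + k * (q - k + a1 + a3)) / (k * (a1 - a2) * (a2 - a3)) &
      n3 = - (a1 * a2 * (q - 1) + k * (q - k + a1 + a2)) / (k * (a2 - a3) * (a3 - a1))].
Proof.
move=> h12 h13 h23 k_neq0 hq m1 m2.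
have d12 : a1 - a2 != 0 by rewrite subr_eq0.
have d31 : a3 - a1 != 0 by rewrite subr_eq0 eq_sym.
have d23 : a2 - a3 != 0 by rewrite subr_eq0.
split; apply: (canRL (mulfK _)); rewrite ?mulf_neq0 //.
- exact: count_from_moments hq m1 m2.
- rewrite -(count_from_moments (n1 := n2) (n2 := n1) (n3 := n3) (a1 := a2) (a2 := a1)).
  + by ring.
  + by rewrite hq; ring.
  + by rewrite -m1; ring.
  + by rewrite -m2; ring.
- rewrite -(count_from_moments (n1 := n3) (n2 := n1) (n3 := n2) (a1 := a3) (a2 := a1) (a3 := a2)).
  + by ring.
  + by rewrite hq; ring.
  + by rewrite -m1; ring.
  + by rewrite -m2; ring.
Qed.

Unset Implicit Arguments.
Theorem lemma2p2 (F : finFieldType) (p f N k : nat) (xi : algC) (g : F)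
    (a1 a2 a3 : rat)
    (hp : prime p) (hchar : p \in [pchar F]) (hq : #|F| = (p ^ f)%N)
    (hN : (2 < N)%N) (hdiv : (N %| #|F|.-1)%N) (hk : k = (#|F|.-1 %/ N)%N)
    (hxi : p.-primitive_root xi) (hg : (#|F|.-1).-primitive_root g)
    (h12 : a1 != a2) (h13 : a1 != a3) (h23 : a2 != a3)
    (hval : forall a : 'I_N, gauss_period p f xi g N a \in [:: ratr a1; ratr a2; ratr a3])
    (hatt1 : exists a : 'I_N, gauss_period p f xi g N a = ratr a1)
    (hatt2 : exists a : 'I_N, gauss_period p f xi g N a = ratr a2)
    (hatt3 : exists a : 'I_N, gauss_period p f xi g N a = ratr a3) :
  let q : rat := (#|F|)%:R in
  let kk : rat := k%:R in
  let I1 := [set a : 'I_N | gauss_period p f xi g N a == ratr a1] in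
  let I2 := [set a : 'I_N | gauss_period p f xi g N a == ratr a2] in
  let I3 := [set a : 'I_N | gauss_period p f xi g N a == ratr a3] in
  [/\ (#|I1|)%:R = - (a2 * a3 * (q - 1) + kk * (q - kk + a2 + a3))
                    / (kk * (a1 - a2) * (a3 - a1)),
      (#|I2|)%:R = - (a1 * a3 * (q - 1) + kk * (q - kk + a1 + a3))
                    / (kk * (a1 - a2) * (a2 - a3)) &
      (#|I3|)%:R = - (a1 * a2 * (q - 1) + kk * (q - kk + a1 + a2))
                    / (kk * (a2 - a3) * (a3 - a1))].
Proof.
move=> q kk I1 I2 I3.
have N_gt0 : (0 < N)%N by apply: ltn_trans hN.
have ratr_inj : injective (@ratr algC) := fmorph_inj _.
have neq_ratr a b : a != b -> (ratr a : algC) != ratr b by rewrite (inj_eq ratr_inj).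
have count := sum_three_valued _ (neq_ratr _ _ h12) (neq_ratr _ _ h13) (neq_ratr _ _ h23) hval.
have card_I : N = (#|I1| + #|I2| + #|I3|)%N.
  by have /eqP := count rat (fun _ => 1); rewrite sumr_const card_ord -!natrD eqr_nat => /eqP.
have card_F : #|F| = ((#|I1| + #|I2| + #|I3|) * k).+1.
  by rewrite -card_I hk mulnC divnK // card_finField_prednK.
apply: solve_three_counts h12 h13 h23 _ _ _ _.
- by rewrite pnatr_eq0 hk -lt0n divn_gt0 // dvdn_leq // -ltnS card_finField_prednK finNzRing_gt1.
- by rewrite /q card_F -addn1 natrD natrM !natrD.
- apply: ratr_inj; rewrite !rmorphD !rmorphM !rmorph_nat !mulr_natl rmorphN1.
  by rewrite -(sum_gauss_period hp hchar hq hxi hg hdiv N_gt0); exact: esym (count _ id).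
- apply: ratr_inj; rewrite rmorphB !rmorphD !rmorphM !rmorph_nat !mulr_natl.
  rewrite /q hk -(sum_gauss_period_normsq hp hchar hq hxi hg hdiv N_gt0).
  by rewrite (count _ (fun z => z * z^*)) !(fmorph_rat Num.conj_op).
Qed.
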